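(* Let $\mathcal D_n$ be a minimal DFA with state set $Q_n$ and transition semigroup $T_n$. For $t\in T_n$ and $p,q\in Q_n$: $p\prec q$ implies $pt\preceq qt$; and if $p\prec pt$, then $p\prec pt\prec\cdots\prec pt^k=pt^{k+1}$ for some $k\ge1$. Similarly, $p\succ q$ implies $pt\succeq qt$, and $p\succ pt$ implies $p\succ pt\succ\cdots\succ pt^k=pt^{k+1}$ for some $k\ge 1$.
   Context: The transition semigroup is the set of transformations $q\mapsto\delta(q,w)$ of $Q_n$ induced by nonempty words $w$; $qt$ denotes the image of $q$ under $t$, and $t^k$ is the $k$-fold composition. For a state $q$, $K_q$ is the language accepted by the DFA started in $q$. We write $p\prec q$ if $K_p\subsetneq K_q$, and $p\preceq q$ if $K_p\subseteq K_q$ (equivalently $p=q$ or $p\prec q$ in a minimal DFA); $\succ,\succeq$ are the reverse relations. *)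

From mathcomp Require Import all_boot.
Set Implicit Arguments. Unset Strict Implicit. Unset Printing Implicit Defensive.

Record dfa (n : nat) (A : finType) := DFA {
  delta : 'I_n -> A -> 'I_n;
  init  : 'I_n;
  final : pred 'I_n
}.

Section DFA.
Variables (n : nat) (A : finType) (D : dfa n A).

Definition delta_star (q : 'I_n) (w : seq A) : 'I_n := foldl (delta D) q w.

Definition accepts (q : 'I_n) (w : seq A) : bool := final D (delta_star q w).

Definition lang_sub (p q : 'I_n) : Prop := forall w, accepts p w -> accepts q w.

Definition st_le (p q : 'I_n) : Prop := lang_sub p q.
Definition st_lt (p q : 'I_n) : Prop := lang_sub p q /\ ~ lang_sub q p.

Definition minimal_dfa : Prop :=
  (forall q : 'I_n, exists w, delta_star (init D) w = q) /\
  (forall p q : 'I_n, (forall w, accepts p w = accepts q w) -> p = q).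

Definition in_trans_semigroup (t : 'I_n -> 'I_n) : Prop :=
  exists w : seq A, 0 < size w /\ forall q, t q = delta_star q w.
End DFA.

(* p t^i written as iter i t p *)

(* Inclusion of languages is a partial order on the states of a minimal DFA
   (antisymmetry is minimality), and every transformation t induced by a word
   w is monotone for it, since K_(qt) is the quotient of K_q by w.  Iterating
   a monotone self-map f of a finite partial order from a point p with p <= pf
   gives a nondecreasing sequence, which must repeat and hence becomes
   constant; up to its first fixed point it increases strictly. The dual
   statements are the same fact for the reverse order. *)

From mathcomp Require Import all_boot.

Section MonotoneIterates.

Variables (T : finType) (le : T -> T -> Prop).
Hypothesis le_refl : forall a, le a a.
Hypothesis le_trans : forall a b c, le a b -> le b c -> le a c.
Hypothesis le_anti : forall a b, le a b -> le b a -> a = b.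
Variables (f : T -> T) (p : T).
Hypothesis f_mono : forall a b, le a b -> le (f a) (f b).
Hypothesis le_f : le p (f p).

Lemma le_iterS i : le (iter i f p) (iter i.+1 f p).
Proof. by elim: i => [|i IHi] //=; apply: f_mono. Qed.

Lemma le_iter_addn i d : le (iter i f p) (iter (d + i) f p).
Proof.
elim: d => [|d IHd] //; rewrite addSn.
exact: le_trans IHd (le_iterS _).
Qed.

Lemma exists_iter_fixed : exists m, iter m f p == iter m.+1 f p.
Proof.
(* By finiteness, the iterate at index [order f p] repeats an earlier one. *)
have /trajectP[i lt_i_ord iter_ord] := looping_order f p.
exists i; apply/eqP/le_anti; first exact: le_iterS.
rewrite -iter_ord -(subnK lt_i_ord).
exact: le_iter_addn.
Qed.

Lemma iter_strict_chain : ~ le (f p) p ->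
  exists k, 1 <= k /\
    (forall i, i < k -> le (iter i f p) (iter i.+1 f p) /\
                        ~ le (iter i.+1 f p) (iter i f p)) /\
    iter k f p = iter k.+1 f p.
Proof.
move=> not_le_fp; case: (ex_minnP exists_iter_fixed) => k /eqP fix_k min_k.
exists k; split; [|split] => //.
- by case: k fix_k {min_k} => // fix_0; case: not_le_fp; rewrite -[f p]fix_0.
- move=> i lt_ik; split; first exact: le_iterS.
  move=> le_Si; have /min_k : iter i f p == iter i.+1 f p.
    by apply/eqP/le_anti => //; apply: le_iterS.
  by rewrite leqNgt lt_ik.
Qed.

End MonotoneIterates.

Section LanguageOrder.

Variables (n : nat) (A : finType) (D : dfa n A).

Lemma lang_sub_refl q : lang_sub D q q.
Proof. by []. Qed.

Lemma lang_sub_trans p q r : lang_sub D p q -> lang_sub D q r -> lang_sub D p r.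
Proof. by move=> pq qr w /pq /qr. Qed.

Lemma minimal_lang_sub_anti p q :
  minimal_dfa D -> lang_sub D p q -> lang_sub D q p -> p = q.
Proof.
move=> [_ inj_lang] pq qp; apply: inj_lang => w.
by apply/idP/idP; [apply: pq | apply: qp].
Qed.

Lemma trans_semigroup_lang_sub t p q :
  in_trans_semigroup D t -> lang_sub D p q -> lang_sub D (t p) (t q).
Proof.
move=> [u [_ tE]] pq w.
by rewrite /accepts !tE /delta_star -!foldl_cat; apply: pq.
Qed.

End LanguageOrder.

Theorem proposition3 (n : nat) (A : finType) (D : dfa n A) :
  minimal_dfa D ->
  forall (t : 'I_n -> 'I_n), in_trans_semigroup D t ->
  forall p q : 'I_n,
    (st_lt D p q -> st_le D (t p) (t q)) /\
    (st_lt D p (t p) ->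
       exists k : nat, 1 <= k /\
         (forall i, i < k -> st_lt D (iter i t p) (iter i.+1 t p)) /\
         iter k t p = iter k.+1 t p) /\
    (st_lt D q p -> st_le D (t q) (t p)) /\
    (st_lt D (t p) p ->
       exists k : nat, 1 <= k /\
         (forall i, i < k -> st_lt D (iter i.+1 t p) (iter i t p)) /\
         iter k t p = iter k.+1 t p).
Proof.
move=> minD t t_in p q.
have anti a b := @minimal_lang_sub_anti _ _ D a b minD.
have mono a b := @trans_semigroup_lang_sub _ _ D t a b t_in.
split; [|split; [|split]].
- by move=> [pq _]; apply: mono.
- move=> [le_p not_le_p]; apply: iter_strict_chain not_le_p => //.
  + exact: lang_sub_refl.
  + exact: lang_sub_trans.
- by move=> [qp _]; apply: mono.
- move=> [le_p not_le_p].
  apply: (@iter_strict_chain _ (fun a b => lang_sub D b a)) not_le_p => //.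
  + exact: lang_sub_refl.
  + by move=> a b c ab bc; apply: lang_sub_trans bc ab.
  + by move=> a b ab ba; apply: anti.
  + by move=> a b; apply: mono.
Qed.
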